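(* For $n\in\mathbb N$ let $a(n)=\lfloor n\varphi\rfloor$, $b(n)=\lfloor n\varphi^2\rfloor$, $m(n)=\lfloor\varphi n\rfloor-n+1$, $f(n)=b(n)$, $g(n)=b(n)-1$, $h(n)=2a(n)+n$. Then for every $k\in\mathbb N$: (i) $m(f(a(k)))=b(k)$; (ii) $m(f(b(k)))+1=b(a(k)+1)$; (iii) $m(g(a(k)))+1=b(k)$; (iv) $m(g(b(k)))+2=b(a(k)+1)$; (v) $m(h(a(k)))+3=b(a(k)+1)$; (vi) $m(h(b(k)))+2=b(b(k)+1)$.
   Context: $\mathbb N=\{1,2,\dots\}$, $\varphi=\frac{1+\sqrt5}{2}$ is the golden ratio. *)

From Stdlib Require Import Reals ZArith.
Open Scope R_scope.

Definition phi : R := (1 + sqrt 5) / 2.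

(* floor as an integer: Stdlib's Int_part r = up r - 1 = floor r *)
Definition floorR (x : R) : Z := Int_part x.

Definition a_ (n : Z) : Z := floorR (IZR n * phi).
Definition b_ (n : Z) : Z := floorR (IZR n * phi ^ 2).
Definition m_ (n : Z) : Z := (floorR (phi * IZR n) - n + 1)%Z.
Definition f_ (n : Z) : Z := b_ n.
Definition g_ (n : Z) : Z := (b_ n - 1)%Z.
Definition h_ (n : Z) : Z := (2 * a_ n + n)%Z.

(* Put A = a(k) and t = kφ - A.  Because φ is irrational, 0 < t < 1 for every
   k <> 0, and because φ^2 = φ + 1 we have Aφ = A + k - t(φ - 1).  Hence for
   integers p, q, r the number (pA + qk + r)φ is (p + q)A + pk plus the small
   real qt - pt(φ - 1) + rφ, whose integer part follows from 0 < t < 1 alone.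
   Since b(n) = a(n) + n and m(n) = a(n) - n + 1, each identity reduces to a
   few such evaluations of a. *)

From Stdlib Require Import Reals ZArith Lra Lia Psatz.

Open Scope R_scope.

Lemma floorR_spec (x : R) : IZR (floorR x) <= x < IZR (floorR x) + 1.
Proof. unfold floorR; pose proof (base_Int_part x); lra. Qed.

Lemma floorR_unique (x : R) (z : Z) : IZR z <= x < IZR z + 1 -> floorR x = z.
Proof. intros Hz; unfold floorR; symmetry; apply Int_part_spec; lra. Qed.

Lemma phi_sqr : phi ^ 2 = phi + 1.
Proof.
  unfold phi; assert (sqrt 5 * sqrt 5 = 5) by (apply sqrt_sqrt; lra); nra.
Qed.

Lemma phi_bounds : 1.618 < phi < 1.61805.
Proof.
  unfold phi; assert (sqrt 5 * sqrt 5 = 5) by (apply sqrt_sqrt; lra).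
  pose proof (sqrt_pos 5); split; nra.
Qed.

Lemma b_eq_a_add (n : Z) : b_ n = (a_ n + n)%Z.
Proof.
  unfold b_, a_; rewrite phi_sqr; apply floorR_unique; rewrite plus_IZR.
  pose proof (floorR_spec (IZR n * phi)); lra.
Qed.

Lemma m_eq_a (n : Z) : m_ n = (a_ n - n + 1)%Z.
Proof. unfold m_, a_; rewrite Rmult_comm; reflexivity. Qed.

Lemma five_divides_square (m : Z) : (5 | m * m)%Z -> (5 | m)%Z.
Proof.
  intros [c Hc]; apply Z.mod_divide; [lia|].
  pose proof (Z.div_mod m 5 ltac:(lia)) as D.
  pose proof (Z.mod_pos_bound m 5 ltac:(lia)) as B.
  set (r := (m mod 5)%Z) in *; set (q := (m / 5)%Z) in *; clearbody r q; subst m.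
  assert (r = 0 \/ r = 1 \/ r = 2 \/ r = 3 \/ r = 4)%Z as [|[|[|[|]]]] by lia;
    subst r; lia.
Qed.

Lemma five_mul_square_eq_square_eq0 (k m : Z) : (5 * (k * k) = m * m)%Z -> k = 0%Z.
Proof.
  revert m.
  induction k as [k IH] using (well_founded_induction (Wf_nat.well_founded_ltof Z Z.abs_nat)).
  intros m E.
  destruct (five_divides_square m) as [m' ->]; [exists (k * k)%Z; lia|].
  destruct (five_divides_square k) as [k' ->]; [exists (m' * m')%Z; lia|].
  destruct (Z.eq_dec k' 0) as [|k'_neq0]; [lia|].
  exfalso; apply k'_neq0, (IH k' ltac:(unfold Wf_nat.ltof; lia) m'); lia.
Qed.

Lemma mul_phi_integer_eq0 (k z : Z) : IZR k * phi = IZR z -> k = 0%Z.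
Proof.
  intros E; apply (five_mul_square_eq_square_eq0 k (2 * z - k)), eq_IZR.
  assert (Hs : sqrt 5 * sqrt 5 = 5) by (apply sqrt_sqrt; lra).
  assert (Hks : IZR k * sqrt 5 = 2 * IZR z - IZR k) by (unfold phi in E; lra).
  rewrite !mult_IZR, minus_IZR, mult_IZR, <- Hks.
  transitivity (sqrt 5 * sqrt 5 * (IZR k * IZR k)); [rewrite Hs | ]; ring.
Qed.

Section WythoffIdentities.

Variable k : Z.
Hypothesis k_neq0 : k <> 0%Z.

Local Notation A := (a_ k).
Let t := IZR k * phi - IZR A.

Lemma frac_bounds : 0 < t < 1.
Proof.
  pose proof (floorR_spec (IZR k * phi)).
  assert (t <> 0).
  { intros E; apply k_neq0, (mul_phi_integer_eq0 k A); unfold t in E; lra. }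
  unfold t, a_ in *; lra.
Qed.

Lemma a_mul_phi : IZR A * phi = IZR A + IZR k - t * (phi - 1).
Proof.
  assert (Hsq : phi * phi = phi + 1) by (rewrite <- phi_sqr; ring).
  unfold t.
  replace (IZR A * phi) with (IZR A * phi - IZR k * (phi * phi - phi - 1))
    by (rewrite Hsq; ring).
  ring.
Qed.

Lemma a_affine (n p q r c : Z) :
  n = (p * A + q * k + r)%Z ->
  IZR c <= IZR q * t - IZR p * (t * (phi - 1)) + IZR r * phi < IZR c + 1 ->
  a_ n = ((p + q) * A + p * k + c)%Z.
Proof.
  intros -> Hc.
  change (floorR (IZR (p * A + q * k + r) * phi) = ((p + q) * A + p * k + c)%Z).
  apply floorR_unique.
  assert (E : IZR (p * A + q * k + r) * phi = IZR ((p + q) * A + p * k)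
            + (IZR q * t - IZR p * (t * (phi - 1)) + IZR r * phi)).
  { rewrite !plus_IZR, !mult_IZR, plus_IZR.
    transitivity (IZR p * (IZR A * phi) + IZR q * (IZR k * phi) + IZR r * phi);
      [ring|].
    rewrite a_mul_phi; unfold t; ring. }
  rewrite E, plus_IZR; lra.
Qed.

Local Ltac affine_bounds :=
  pose proof frac_bounds; pose proof phi_bounds; nra.

Lemma a_of_a : a_ A = (A + k - 1)%Z.
Proof. rewrite (a_affine _ 1 0 0 (-1)); [lia | lia | affine_bounds]. Qed.

Lemma a_of_b : a_ (A + k) = (2 * A + k)%Z.
Proof. rewrite (a_affine _ 1 1 0 0); [lia | lia | affine_bounds]. Qed.

Lemma a_of_a_succ : a_ (A + 1) = (A + k + 1)%Z.
Proof. rewrite (a_affine _ 1 0 1 1); [lia | lia | affine_bounds]. Qed.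

Lemma a_of_b_succ : a_ (A + k + 1) = (2 * A + k + 1)%Z.
Proof. rewrite (a_affine _ 1 1 1 1); [lia | lia | affine_bounds]. Qed.

Lemma m_f_a : m_ (f_ A) = b_ k.
Proof.
  unfold f_; rewrite !b_eq_a_add, a_of_a, m_eq_a.
  rewrite (a_affine _ 2 1 (-1) (-2)); [lia | lia | affine_bounds].
Qed.

Lemma m_f_b : (m_ (f_ (b_ k)) + 1)%Z = b_ (A + 1).
Proof.
  unfold f_; rewrite !b_eq_a_add, a_of_b, a_of_a_succ, m_eq_a.
  rewrite (a_affine _ 3 2 0 0); [lia | lia | affine_bounds].
Qed.

Lemma m_g_a : (m_ (g_ A) + 1)%Z = b_ k.
Proof.
  unfold g_; rewrite !b_eq_a_add, a_of_a, m_eq_a.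
  rewrite (a_affine _ 2 1 (-2) (-4)); [lia | lia | affine_bounds].
Qed.

Lemma m_g_b : (m_ (g_ (b_ k)) + 2)%Z = b_ (A + 1).
Proof.
  unfold g_; rewrite !b_eq_a_add, a_of_b, a_of_a_succ, m_eq_a.
  rewrite (a_affine _ 3 2 (-1) (-2)); [lia | lia | affine_bounds].
Qed.

Lemma m_h_a : (m_ (h_ A) + 3)%Z = b_ (A + 1).
Proof.
  unfold h_; rewrite b_eq_a_add, a_of_a, a_of_a_succ, m_eq_a.
  rewrite (a_affine _ 3 2 (-2) (-4)); [lia | lia | affine_bounds].
Qed.

Lemma m_h_b : (m_ (h_ (b_ k)) + 2)%Z = b_ (b_ k + 1).
Proof.
  unfold h_; rewrite !b_eq_a_add, a_of_b, a_of_b_succ, m_eq_a.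
  rewrite (a_affine _ 5 3 0 (-1)); [lia | lia | affine_bounds].
Qed.

End WythoffIdentities.

Theorem lemma5p4 : forall k : Z, (1 <= k)%Z ->
  m_ (f_ (a_ k)) = b_ k /\
  (m_ (f_ (b_ k)) + 1)%Z = b_ (a_ k + 1) /\
  (m_ (g_ (a_ k)) + 1)%Z = b_ k /\
  (m_ (g_ (b_ k)) + 2)%Z = b_ (a_ k + 1) /\
  (m_ (h_ (a_ k)) + 3)%Z = b_ (a_ k + 1) /\
  (m_ (h_ (b_ k)) + 2)%Z = b_ (b_ k + 1).
Proof.
  intros k hk; assert (k_neq0 : k <> 0%Z) by lia.
  repeat split; auto using m_f_a, m_f_b, m_g_a, m_g_b, m_h_a, m_h_b.
Qed.
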